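(* Let $c>0$, $\Delta_1,\dots,\Delta_K\in(0,1]$ and $T\ge K$. Let $\Psi_c\ge0$ be the unique solution $x\ge0$ of \[ \sum_{i=1}^K\Big(\mathbb{I}\{x\le\ln\Delta_i^{-1}\}e^{2x}+\mathbb{I}\{x>\ln\Delta_i^{-1}\}\frac{x-\ln\Delta_i^{-1}+c/2}{c\Delta_i^2/2}\Big)=T. \] Then an optimal solution of $\mathscr{P}_c(\{\max\{\Delta_i,e^{-\Psi_c}\}\}_{i=1}^K,T)$ is given by \[ x_i=\mathbb{I}\{\Psi_c\le\ln\Delta_i^{-1}\}e^{2\Psi_c}+\mathbb{I}\{\Psi_c>\ln\Delta_i^{-1}\}\frac{\Psi_c-\ln\Delta_i^{-1}+c/2}{c\Delta_i^2/2},\quad i=1,\dots,K. \]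
   Context: For $c>0$, $T\ge0$ and positive reals $D_1,\dots,D_K$, the program $\mathscr{P}_c(\{D_i\}_{i=1}^K,T)$ is: minimize $\sum_{i=1}^K\exp(-c x_iD_i^2)$ subject to $x_1+\dots+x_K=T$, $x_i\ge0$. The left-hand side of the defining equation of $\Psi_c$ is continuous and strictly increasing in $x\ge0$, equals $K$ at $x=0$, and tends to $\infty$, so $\Psi_c$ is well defined. *)

From HB Require Import structures.
From mathcomp Require Import all_boot all_order all_algebra.
From mathcomp Require Import all_classical all_reals all_analysis.
Set Implicit Arguments. Unset Strict Implicit. Unset Printing Implicit Defensive.
Import Order.TTheory GRing.Theory Num.Theory.
Local Open Scope ring_scope.

Definition psi_term (R : realType) (c Di x : R) : R :=
  if x <= ln Di^-1 then expR (2 * x)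
  else (x - ln Di^-1 + c / 2) / (c * Di ^+ 2 / 2).

Definition psi_lhs (R : realType) (K : nat) (c : R) (D : 'I_K -> R) (x : R) : R :=
  \sum_(i < K) psi_term c (D i) x.

Definition Pobj (R : realType) (K : nat) (c : R) (D : 'I_K -> R)
  (x : 'I_K -> R) : R :=
  \sum_(i < K) expR (- (c * x i * D i ^+ 2)).

Definition Pfeasible (R : realType) (K : nat) (T : R) (x : 'I_K -> R) : Prop :=
  \sum_(i < K) x i = T /\ forall i, 0 <= x i.

Definition Poptimal (R : realType) (K : nat) (c : R) (D : 'I_K -> R) (T : R)
  (x : 'I_K -> R) : Prop :=
  Pfeasible T x /\ forall y, Pfeasible T y -> Pobj c D x <= Pobj c D y.

(** The objective is a sum of convex functions [t |-> exp (-c t D_i^2)] of the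
    separate coordinates, so a feasible point at which all partial derivatives
    coincide is a minimiser on the hyperplane [sum x_i = T]: each term lies above
    its tangent, and the tangent corrections sum to zero.  With
    [D_i' = max (D_i, e^-Psi)], the point [x_i = psi_term c D_i Psi] makes every
    marginal cost [c D_i'^2 exp (-c x_i D_i'^2)] equal to [c e^(-c - 2 Psi)]:
    if [Psi <= ln D_i^-1] then [D_i' = e^-Psi] and [x_i = e^(2 Psi)], otherwise
    [D_i' = D_i] and [c x_i D_i^2 = c + 2 Psi + 2 ln D_i]. *)
From HB Require Import structures.
From mathcomp Require Import all_boot all_order all_algebra.
From mathcomp Require Import all_classical all_reals all_analysis.
From mathcomp Require Import ring lra.
Set Implicit Arguments. Unset Strict Implicit. Unset Printing Implicit Defensive.
Import Order.TTheory GRing.Theory Num.Theory.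
Local Open Scope ring_scope.

Lemma expR_tangent_le (R : realType) (a b : R) :
  expR a + expR a * (b - a) <= expR b.
Proof.
have -> : expR b = expR a * expR (b - a) by rewrite -expRD addrC subrK.
by rewrite -[X in X + _]mulr1 -mulrDr ler_wpM2l ?expR_ge1Dx.
Qed.

Lemma Poptimal_equal_marginals (R : realType) (K : nat) (c : R)
    (D : 'I_K -> R) (T k : R) (x : 'I_K -> R) :
  Pfeasible T x ->
  (forall i, c * D i ^+ 2 * expR (- (c * x i * D i ^+ 2)) = k) ->
  Poptimal c D T x.
Proof.
move=> x_feasible marginal; split=> // y [sum_y _].
have [sum_x _] := x_feasible.
have tangent i : expR (- (c * x i * D i ^+ 2)) - k * (y i - x i)
    <= expR (- (c * y i * D i ^+ 2)).
  rewrite -(marginal i).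
  set a := - (c * x i * D i ^+ 2).
  have -> : - (c * y i * D i ^+ 2) = a + - (c * D i ^+ 2 * (y i - x i)).
    by rewrite /a; ring.
  by have := expR_tangent_le a (a + - (c * D i ^+ 2 * (y i - x i))); lra.
apply: le_trans (ler_sum _ (fun i _ => tangent i)).
by rewrite big_split /= sumrN -mulr_sumr sumrB sum_x sum_y subrr mulr0 subr0.
Qed.

Lemma psi_term_ge0 (R : realType) (c d x : R) :
  0 < c -> 0 < d -> 0 <= psi_term c d x.
Proof.
move=> c_gt0 d_gt0; rewrite /psi_term; case: ifPn => [_|].
  exact/ltW/expR_gt0.
rewrite -ltNge => lt_ln_x.
by apply/ltW/divr_gt0; [lra | rewrite !mulr_gt0 ?exprn_gt0].
Qed.

Lemma psi_term_marginal (R : realType) (c d P : R) : 0 < c -> 0 < d ->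
  let d' := Num.max d (expR (- P)) in
  c * d' ^+ 2 * expR (- (c * psi_term c d P * d' ^+ 2))
  = c * expR (- c - 2 * P).
Proof.
move=> c_gt0 d_gt0 d'.
have d_pos : d \in Num.pos by rewrite posrE.
have expP_neq0 : expR P != 0 by rewrite gt_eqF ?expR_gt0.
have expRcP : expR (- c - 2 * P) = expR (- c) * (expR P ^+ 2)^-1.
  by rewrite expRD -expRM_natl -expRN.
rewrite /d' /psi_term lnV //; case: ifPn => [le_P_ln|].
- have -> : Num.max d (expR (- P)) = expR (- P).
    by apply/max_r; rewrite -[d](lnK d_pos) ler_expR; lra.
  rewrite expRM_natl expRN.
  have -> : c * expR P ^+ 2 * (expR P)^-1 ^+ 2 = c by field.
  by rewrite expRcP; field.
- rewrite -ltNge => lt_ln_P.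
  have -> : Num.max d (expR (- P)) = d.
    by apply/max_l/ltW; rewrite -[X in _ < X](lnK d_pos) ltr_expR; lra.
  have -> : - (c * ((P - - ln d + c / 2) / (c * d ^+ 2 / 2)) * d ^+ 2)
      = (- c - 2 * P) + - (2 * ln d).
    by field; rewrite ?gt_eqF.
  rewrite expRD expRN expRM_natl lnK //.
  by field; rewrite gt_eqF.
Qed.

Theorem lemma4 (R : realType) (K : nat) (c : R) (D : 'I_K -> R) (T : R)
  (Psi : R)
  (hc : 0 < c) (hD : forall i, 0 < D i <= 1) (hT : K%:R <= T)
  (hPsi0 : 0 <= Psi) (hPsi : psi_lhs c D Psi = T) :
  Poptimal c (fun i => Num.max (D i) (expR (- Psi))) T
    (fun i => psi_term c (D i) Psi).
Proof.
apply: (Poptimal_equal_marginals (k := c * expR (- c - 2 * Psi))).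
  split=> [|i]; first exact: hPsi.
  by have /andP[D_gt0 _] := hD i; exact: psi_term_ge0.
by move=> i; have /andP[D_gt0 _] := hD i; exact: psi_term_marginal.
Qed.
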